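(* Let $d\ge1$, $\alpha\ge1$, and $G\in\mathcal{C}^d_\alpha$ (with a fixed representing system of sets). Let $v$ be a maximal vertex of $G$, let $D_i$ be the set of vertices at distance $i$ from $v$ in $G$, and let $(\hat G,w)$ be the weighted graph obtained from $G$ by giving every edge of $G$ weight $1$ and adding, for every pair $x,y$ of vertices lying in a common $D_i$ such that $y$ contains $x$, an edge $xy$ of weight $2$. Then $\mathrm{dist}_G(x,y)=\mathrm{dist}_{(\hat G,w)}(x,y)$ for all $x,y\in V(G)$.
   Context: The height of a bounded convex set $X\subseteq\mathbb{R}^d$ is the infimum of $h\ge0$ such that $X$ lies between two parallel hyperplanes at distance $h$; its aspect ratio is its diameter divided by its height. $\mathcal{C}^d_\alpha$ is the class of connected intersection graphs of systems of path-connected sets in $\mathbb{R}^d$, each obtained from a compact convex set of aspect ratio at most $\alpha$ by removing some subset of its interior (vertices are identified with the sets; adjacent iff they intersect). For a vertex $x$, $\overline{x}$ denotes the convex hull of the set $x$. A vertex $y$ contains a different vertex $x$ if $\overline{x}\subseteq\overline{y}$; a vertex $x$ is maximal if no other vertex contains it. In a weighted graph, the length of a path is the sum of its edge weights and $\mathrm{dist}$ is the infimum of lengths of connecting paths. *)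

From HB Require Import structures.
From mathcomp Require Import all_boot all_order all_algebra.
From mathcomp Require Import all_classical all_reals all_analysis.
Set Implicit Arguments. Unset Strict Implicit. Unset Printing Implicit Defensive.
Import Order.TTheory GRing.Theory Num.Theory.
Import numFieldNormedType.Exports.
Local Open Scope classical_set_scope.
Local Open Scope ring_scope.

Section Geometry.
Variables (R : realType) (d : nat).
Notation pt := 'rV[R]_d.

Definition dotp (u v : pt) : R := \sum_(i < d) u ord0 i * v ord0 i.
Definition enorm (u : pt) : R := Num.sqrt (dotp u u).

Definition is_convex (A : set pt) : Prop :=
  forall x y (t : R), A x -> A y -> 0 <= t <= 1 -> A (t *: x + (1 - t) *: y).
Definition conv_hull (X : set pt) : set pt :=
  \bigcap_(C in [set C | is_convex C /\ X `<=` C]) C.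

Definition bounded_set (X : set pt) : Prop :=
  exists M : R, forall p, X p -> enorm p <= M.

Definition in_slab (X : set pt) (h : R) : Prop :=
  exists (u : pt) (c : R), enorm u = 1 /\
    forall p, X p -> c <= dotp u p <= c + h.
Definition height (X : set pt) : R := inf [set h | 0 <= h /\ in_slab X h].
Definition diam (X : set pt) : R :=
  sup [set enorm (p - q) | p in X & q in X].

(* aspect ratio diam/height is at most alpha; written multiplicatively *)
Definition aspect_le (X : set pt) (alpha : R) : Prop :=
  diam X <= alpha * height X.

Definition path_connected (A : set pt) : Prop :=
  forall p q, A p -> A q -> exists f : R -> pt,
    [/\ f 0 = p, f 1 = q, {within `[0, 1], continuous f} &
        forall t, 0 <= t <= 1 -> A (f t)].

Definition admissible_set (alpha : R) (S : set pt) : Prop :=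
  exists K : set pt,
    [/\ compact K, is_convex K, aspect_le K alpha &
        (K `\` interior K) `<=` S /\ S `<=` K].

End Geometry.

Section Graphs.
Variable V : Type.

Inductive walk (adj : V -> V -> Prop) : V -> V -> nat -> Prop :=
| walk0 x : walk adj x x 0
| walkS x y z n : adj x y -> walk adj y z n -> walk adj x z n.+1.

Definition is_dist (adj : V -> V -> Prop) (x y : V) (n : nat) : Prop :=
  walk adj x y n /\ forall m, walk adj x y m -> (n <= m)%N.

Definition connected_graph (adj : V -> V -> Prop) : Prop :=
  forall x y, exists n, walk adj x y n.

(* weighted graph: wedge x y w means there is an edge xy of weight w *)
Inductive wwalk (wedge : V -> V -> nat -> Prop) : V -> V -> nat -> Prop :=
| wwalk0 x : wwalk wedge x x 0
| wwalkS x y z w n : wedge x y w -> wwalk wedge y z n -> wwalk wedge x z (w + n).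

Definition is_wdist (wedge : V -> V -> nat -> Prop) (x y : V) (n : nat) : Prop :=
  wwalk wedge x y n /\ forall m, wwalk wedge x y m -> (n <= m)%N.

End Graphs.

Section IntersectionGraph.
Variables (R : realType) (d : nat) (V : Type) (S : V -> set 'rV[R]_d).

Definition igraph (x y : V) : Prop := x <> y /\ S x `&` S y !=set0.

Definition contains (y x : V) : Prop :=
  x <> y /\ conv_hull (S x) `<=` conv_hull (S y).

Definition maximal_vertex (v : V) : Prop := forall y, ~ contains y v.

Definition hat_edge (v : V) (x y : V) (w : nat) : Prop :=
  (igraph x y /\ w = 1%N) \/
  (w = 2%N /\ exists i, is_dist igraph v x i /\ is_dist igraph v y i /\
                          (contains y x \/ contains x y)).

End IntersectionGraph.

(* Let y contain x, both at distance i from the maximal vertex v, and let K be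
   the compact convex set from which S y is obtained.  Since S y keeps the
   boundary of K, and every point of a compact set (in dimension >= 1) lies
   on a segment between two boundary points, the hull of S y is K.  Hence S x
   lies in K while S v does not (v is maximal).  Walking along a shortest
   v-x path, some set must cross the boundary of K, i.e. meet S y; that
   vertex is at distance i or i - 1 from v, and this yields a y-x walk of
   length at most 2.  So every weight-2 edge of the weighted graph can be
   replaced by a walk of at most the same length in G, and the distances
   coincide. *)
From HB Require Import structures.
From mathcomp Require Import all_boot all_order all_algebra.
From mathcomp Require Import all_classical all_reals all_analysis.
From mathcomp Require Import ring lra zify.
Import Order.TTheory GRing.Theory Num.Theory.
Import numFieldNormedType.Exports.
Local Open Scope classical_set_scope.
Local Open Scope ring_scope.

Set Implicit Arguments.
Unset Strict Implicit.

Section ConvexHull.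
Variables (R : realType) (d : nat).
Implicit Types X C : set 'rV[R]_d.

Lemma conv_hull_convex X : is_convex (conv_hull X).
Proof.
move=> x y t Hx Hy t01 C [cC XC].
exact: cC (Hx C (conj cC XC)) (Hy C (conj cC XC)) t01.
Qed.

Lemma sub_conv_hull X : X `<=` conv_hull X.
Proof. by move=> x Xx C [_ XC]; apply: XC. Qed.

Lemma conv_hull_min X C : is_convex C -> X `<=` C -> conv_hull X `<=` C.
Proof. by move=> cC XC x Hx; apply: Hx. Qed.

Lemma conv_hullS X C : X `<=` C -> conv_hull X `<=` conv_hull C.
Proof.
move=> XC; apply: conv_hull_min; first exact: conv_hull_convex.
by move=> x /XC /sub_conv_hull.
Qed.

Lemma conv_hull_between X (p e : 'rV[R]_d) (a b : R) : 0 < a -> 0 < b ->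
  X (p + a *: e) -> X (p - b *: e) -> conv_hull X p.
Proof.
move=> a0 b0 Xa Xb; pose l := b / (a + b).
have l01 : 0 <= l <= 1.
  apply/andP; split; first by rewrite divr_ge0 ?ltW ?addr_gt0.
  by rewrite ler_pdivrMr ?addr_gt0 // mul1r lerDr ltW.
have := conv_hull_convex (sub_conv_hull Xa) (sub_conv_hull Xb) l01.
suff -> : l *: (p + a *: e) + (1 - l) *: (p - b *: e) = p by [].
rewrite !scalerDr scalerN !scalerA addrACA -scalerDl subrKC scale1r.
have -> : l * a = (1 - l) * b by rewrite /l; field; rewrite lt0r_neq0 ?addr_gt0.
by rewrite subrr addr0.
Qed.

End ConvexHull.

Section Boundary.
Variable R : realType.

Lemma path_meets_boundary (T : normedModType R) (K : set T) (f : R -> T) :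
  closed K -> {within `[0, 1], continuous f} -> K (f 0) -> ~ K (f 1) ->
  exists2 t, 0 <= t <= 1 & (K `\` K°) (f t).
Proof.
move=> cK cf K0 K1; apply: contrapT => noB.
have fI_conn := connected_continuous_connected (@segment_connected R 0 1) cf.
have sep : separated K° (~` K).
  split.
    apply/seteqP; split => // x [/(closureS (@interior_subset _ K))].
    by rewrite -(closure_id K).1.
  by rewrite closure_setC; apply/seteqP; split => // x [? []].
have fI_sub : f @` `[0, 1] `<=` K° `|` ~` K.
  move=> _ [t t01 <-]; have [Kt|] := pselect (K (f t)); last by right.
  left; apply: contrapT => nIt; apply: noB; exists t; last by split.
  by move: t01; rewrite /= in_itv.
have [fI_int|fI_out] := connected_subset sep fI_sub fI_conn.
  apply: K1; apply: interior_subset; apply: fI_int; exists 1 => //.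
  by rewrite /= in_itv /= lexx ler01.
by apply: (fI_out (f 0)) => //; exists 0 => //; rewrite /= in_itv /= lexx ler01.
Qed.

Lemma path_connected_meets_boundary d (K A : set 'rV[R]_d) :
  closed K -> path_connected A -> A `&` K !=set0 -> ~ A `<=` K ->
  A `&` (K `\` K°) !=set0.
Proof.
move=> cK pA [p [Ap Kp]] nAK.
have [q [Aq nKq]] : exists q, A q /\ ~ K q.
  by apply: contrapT => H; apply: nAK => q Aq; apply: contrapT => nKq; apply: H; exists q.
have [f [f0 f1 cf fA]] := pA p q Ap Aq.
have [||t t01 Bt] := path_meets_boundary cK cf; rewrite ?f0 ?f1 //.
by exists (f t); split => //; apply: fA.
Qed.

Lemma ray_meets_boundary (T : normedModType R) (K : set T) (p e : T) :
  closed K -> K° p -> ~ K (p + e) ->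
  exists2 s, 0 < s <= 1 & (K `\` K°) (p + s *: e).
Proof.
move=> cK Ip nKe.
have cf : {within `[0, 1], continuous (fun t : R => p + t *: e)}.
  apply: continuous_subspaceT => t; apply: cvgD; first exact: cvg_cst.
  by apply: cvgZr_tmp; apply: cvg_id.
have [||s /andP[s0 s1] [Ks Is]] := path_meets_boundary cK cf.
- by rewrite scale0r addr0; apply: interior_subset.
- by rewrite scale1r.
exists s => //; rewrite s1 andbT lt_neqAle s0 andbT.
by apply/eqP => s0'; apply: Is; rewrite -s0' scale0r addr0.
Qed.

Lemma compact_ray_escape (T : normedModType R) (K : set T) (p e : T) :
  compact K -> e != 0 -> exists2 c, 0 < c & ~ K (p + c *: e) /\ ~ K (p - c *: e).
Proof.
move=> cK e0; have [M M0 KM] := pinfty_ex_gt0 (compact_bounded cK).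
have ne0 : 0 < `|e| by rewrite normr_gt0.
pose c := (M + `|p| + 1) / `|e|.
have c0 : 0 < c by rewrite divr_gt0 //; have := normr_ge0 p; lra.
have norm_ce : `|c *: e| = M + `|p| + 1.
  by rewrite normrZ gtr0_norm // divfK // gt_eqF.
have far q : `|q - p| = `|c *: e| -> ~ K q.
  move=> qp Kq; have /= := KM q Kq; have := ler_normB q p; rewrite qp norm_ce; lra.
exists c => //; split; apply: far; first by rewrite addrAC subrr add0r.
by rewrite addrAC subrr add0r normrN.
Qed.

Lemma compact_sub_conv_hull_boundary d (K : set 'rV[R]_d) :
  (0 < d)%N -> compact K -> K `<=` conv_hull (K `\` K°).
Proof.
move=> d0 cK p Kp; have [Ip|nIp] := pselect (K° p); last exact: sub_conv_hull.
have clK : closed K := compact_closed (@norm_hausdorff _ _) cK.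
pose e : 'rV[R]_d := delta_mx ord0 (Ordinal d0).
have e0 : e != 0.
  apply/eqP => /matrixP/(_ ord0 (Ordinal d0)).
  by rewrite !mxE !eqxx; apply/eqP; rewrite oner_neq0.
have [c c0 [nK1 nK2]] := compact_ray_escape p cK e0.
have [s1 /andP[s10 _] B1] := ray_meets_boundary clK Ip nK1.
have [s2 /andP[s20 _] B2] := ray_meets_boundary clK Ip (nK2 : ~ K (p + - (c *: e))).
rewrite scalerA in B1; rewrite scalerN scalerA in B2.
exact: conv_hull_between (mulr_gt0 s10 c0) (mulr_gt0 s20 c0) B1 B2.
Qed.

End Boundary.

Section Walks.
Variable V : Type.
Implicit Types (adj : V -> V -> Prop) (wedge : V -> V -> nat -> Prop).

Lemma walk_cat adj a b c m n :
  walk adj a b m -> walk adj b c n -> walk adj a c (m + n).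
Proof.
elim=> {a b m} [//|x y z k xy _ IH] bc.
by rewrite addSn; apply: walkS xy (IH bc).
Qed.

Lemma walk_edge adj a b : adj a b -> walk adj a b 1.
Proof. by move=> ab; apply: walkS ab (walk0 _ _). Qed.

Lemma walk_sym adj a b n :
  (forall x y, adj x y -> adj y x) -> walk adj a b n -> walk adj b a n.
Proof.
move=> adj_sym; elim=> {a b n} [x|x y z k xy _ IH]; first exact: walk0.
by rewrite -addn1; apply: walk_cat IH (walk_edge (adj_sym _ _ xy)).
Qed.

Lemma walk_0_eq adj a b : walk adj a b 0 -> a = b.
Proof. by move=> w; inversion w. Qed.

Lemma is_dist_iff_wdist adj wedge x y n :
  (forall a b m, walk adj a b m -> wwalk wedge a b m) ->
  (forall a b m, wwalk wedge a b m -> exists2 k, (k <= m)%N & walk adj a b k) ->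
  is_dist adj x y n <-> is_wdist wedge x y n.
Proof.
move=> walk_wwalk wwalk_walk; split.
- move=> [w w_min]; split; first exact: walk_wwalk.
  by move=> m /wwalk_walk [k km /w_min nk]; apply: leq_trans km.
- move=> [w w_min]; have [k kn wk] := wwalk_walk _ _ _ w.
  have nk := w_min _ (walk_wwalk _ _ _ wk).
  have n_k : n = k by apply/eqP; rewrite eqn_leq kn nk.
  by subst n; split=> // m /walk_wwalk /w_min.
Qed.

End Walks.

Section IntersectionGraph.
Variables (R : realType) (d : nat) (alpha : R) (V : Type) (S : V -> set 'rV[R]_d).
Hypotheses (d_gt0 : (0 < d)%N) (S_pconn : forall x, path_connected (S x))
  (S_adm : forall x, admissible_set alpha (S x)).

Lemma igraph_sym a b : igraph S a b -> igraph S b a.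
Proof. by move=> [ab [q [Saq Sbq]]]; split; [move/esym | exists q]. Qed.

Lemma admissible_conv_hull x : exists K : set 'rV[R]_d,
  [/\ compact K, (K `\` K°) `<=` S x & conv_hull (S x) = K].
Proof.
have [K [cK cvK _ [bK SK]]] := S_adm x.
exists K; split=> //; apply/seteqP; split; first exact: conv_hull_min.
by move=> p /(compact_sub_conv_hull_boundary d_gt0 cK); apply: conv_hullS.
Qed.

Lemma walk_meets_boundary (K : set 'rV[R]_d) a b m :
  closed K -> walk (igraph S) a b m -> ~ S a `<=` K -> S b `<=` K ->
  exists c m', [/\ (m' <= m)%N, walk (igraph S) a c m', walk (igraph S) c b (m - m')
                 & S c `&` (K `\` K°) !=set0].
Proof.
move=> cK; elim=> {a b m} [x|x y z k xy wyz IH] nSxK SzK; first by [].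
have [SxK|noSxK] := pselect (S x `&` K !=set0).
  exists x, 0%N; split=> //; first exact: walk0.
    by rewrite subn0; apply: walkS xy wyz.
  exact: path_connected_meets_boundary.
have nSyK : ~ S y `<=` K.
  move: xy => [_ [q [Sxq Syq]]] SyK; apply: noSxK; exists q; split=> //; exact: SyK.
have [c [m' [m'k w1 w2 cB]]] := IH nSyK SzK.
by exists c, m'.+1; split=> //; apply: walkS xy w1.
Qed.

Variable v : V.
Hypothesis v_max : maximal_vertex S v.

Lemma contains_same_level_walk_le2 x y i :
  is_dist (igraph S) v x i -> is_dist (igraph S) v y i -> contains S y x ->
  exists2 k, (k <= 2)%N & walk (igraph S) y x k.
Proof.
move=> [vx _] [_ vy_min] [xy Sx_Sy].
have [K [cK bK hullK]] := admissible_conv_hull y.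
have clK : closed K := compact_closed (@norm_hausdorff _ _) cK.
have vy : v <> y.
  move=> vy; have i0 : i = 0%N.
    by apply/eqP; rewrite -leqn0; apply: vy_min; rewrite -vy; apply: walk0.
  by rewrite i0 in vx; apply: xy; rewrite -vy (walk_0_eq vx).
have nSvK : ~ S v `<=` K.
  move=> SvK; apply: (@v_max y); split=> //; rewrite hullK.
  by apply: conv_hull_min SvK; rewrite -hullK; apply: conv_hull_convex.
have SxK : S x `<=` K by rewrite -hullK => p /sub_conv_hull /Sx_Sy.
have [c [m' [m'i w1 w2 [q [Scq /bK Syq]]]]] := walk_meets_boundary clK vx nSvK SxK.
have [c_y | cy] := pselect (c = y).
  by subst c; exists (i - m')%N => //; have := vy_min _ w1; lia.
have cy_adj : igraph S c y by split=> //; exists q.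
have := vy_min _ (walk_cat w1 (walk_edge cy_adj)).
exists (1 + (i - m'))%N; first lia.
exact: walk_cat (walk_edge (igraph_sym cy_adj)) w2.
Qed.

Lemma wwalk_hat_walk a b n : wwalk (hat_edge S v) a b n ->
  exists2 m, (m <= n)%N & walk (igraph S) a b m.
Proof.
elim=> {a b n} [x | x y z w n xy _ [m mn wm]]; first by exists 0%N => //; apply: walk0.
case: xy => [[xy ->]|[-> [i [dx [dy [yx|xy]]]]]].
- by exists m.+1 => //; apply: walkS xy wm.
- have [k k2 wk] := contains_same_level_walk_le2 dx dy yx.
  exists (k + m)%N; first lia.
  exact: walk_cat (walk_sym igraph_sym wk) wm.
- have [k k2 wk] := contains_same_level_walk_le2 dy dx xy.
  by exists (k + m)%N; [lia | apply: walk_cat wk wm].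
Qed.

End IntersectionGraph.

Lemma walk_hat_wwalk (R : realType) (d : nat) (V : Type) (S : V -> set 'rV[R]_d) v a b n :
  walk (igraph S) a b n -> wwalk (hat_edge S v) a b n.
Proof.
elim=> {a b n} [x|x y z k xy _ IH]; first exact: wwalk0.
by rewrite -add1n; apply: wwalkS IH; left.
Qed.

Unset Implicit Arguments.
Set Strict Implicit.

Theorem lemma5p3 (R : realType) (d : nat) (alpha : R) (V : Type)
    (S : V -> set 'rV[R]_d) (v : V) :
  (1 <= d)%N -> 1 <= alpha ->
  (forall x, path_connected (S x) /\ admissible_set alpha (S x)) ->
  connected_graph (igraph S) ->
  maximal_vertex S v ->
  forall (x y : V) (n : nat),
    is_dist (igraph S) x y n <-> is_wdist (hat_edge S v) x y n.
Proof.
move=> d_gt0 _ S_ok _ v_max x y n.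
apply: is_dist_iff_wdist; first exact: walk_hat_wwalk.
exact: wwalk_hat_walk d_gt0 (fun z => (S_ok z).1) (fun z => (S_ok z).2) v v_max.
Qed.
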